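(* There is an absolute constant $c>0$ such that the following holds. Let $G$ be a finite simple graph with maximum degree $d\ge 1$, and let $D(G)$ be a straight-line drawing of $G$ in the base plane $\mathcal{P}_1=\{z=0\}\subset\mathbb{R}^3$ with arbitrary but distinct vertex positions (no assumption on the angular resolution of $D(G)$). Then there is a 3D arc diagram drawing of $G$ with base plane $\mathcal{P}_1$ and with the same vertex positions as $D(G)$ whose angular resolution is at least $c/d$.
   Context: A 3D arc diagram drawing of $G$ with base plane $\mathcal{P}_1=\{z=0\}$ is a placement of the vertices at distinct points of $\mathcal{P}_1$, together with, for each edge $e=(a,b)$, a circular arc (a contiguous subset of a circle; a straight segment is allowed as the degenerate case) with endpoints at the positions of $a$ and $b$, such that: the arc lies in the plane $\mathcal{P}_2$ containing the segment $ab$ and perpendicular to $\mathcal{P}_1$ (so the arc projects perpendicularly onto the segment $ab$ in $\mathcal{P}_1$); all arcs lie in the closed half-space $z\ge 0$; and the arc forms the same angle $\alpha_e\in[0,\pi/2]$ with the segment $ab$ at both of its endpoints. The angle between two arcs incident to a common vertex $v$ is the angle in $[0,\pi]$ between their tangent rays at $v$ (directed into the arcs). The angular resolution of the drawing is the minimum of this angle over all vertices $v$ and all pairs of distinct edges incident to $v$. *)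

From mathcomp Require Import all_boot.
From Stdlib Require Import Reals.

Set Implicit Arguments.
Unset Strict Implicit.
Unset Printing Implicit Defensive.

Definition simple_graph (T : finType) (e : rel T) : Prop :=
  symmetric e /\ irreflexive e.

Definition degree (T : finType) (e : rel T) (v : T) : nat :=
  #|[pred u | e v u]|.

Definition max_degree (T : finType) (e : rel T) : nat :=
  (\max_(v : T) degree e v)%N.

Local Open Scope R_scope.

(* Points of R^3 as triples; vertex positions lie in P1 = {z = 0}, given
   by their (x,y)-coordinates  pos : T -> R * R. *)
Definition R3 := (R * R * R)%type.

Definition dot3 (p q : R3) : R :=
  let '(x1, y1, z1) := p in let '(x2, y2, z2) := q in x1 * x2 + y1 * y2 + z1 * z2.

Definition norm3 (p : R3) : R := sqrt (dot3 p p).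

Definition vangle (p q : R3) : R := acos (dot3 p q / (norm3 p * norm3 q)).

(* A 3D arc diagram drawing with base plane P1 and vertex positions pos is
   determined by the angle alpha_e in [0, pi/2] of each edge e = {a,b}: the arc
   of e is the unique circular arc (segment if alpha_e = 0) in the vertical
   plane through ab, in the half-space z >= 0, meeting ab at angle alpha_e at
   both ends.  We record alpha as a function T -> T -> R that must be symmetric
   on edges (one arc per edge). *)
Definition arc_diagram (T : finType) (e : rel T) (alpha : T -> T -> R) : Prop :=
  forall a b, e a b -> alpha a b = alpha b a /\ 0 <= alpha a b <= PI / 2.

(* Tangent direction, at the endpoint v, of the arc of edge {v,u} with angle
   al, directed into the arc: it lies in the vertical plane through
   pos v, pos u, makes angle al with the direction from pos v to pos u, and
   points upward (z >= 0). *)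
Definition arc_tangent (T : Type) (pos : T -> R * R) (v u : T) (al : R) : R3 :=
  let dx := fst (pos u) - fst (pos v) in
  let dy := snd (pos u) - snd (pos v) in
  let L := sqrt (dx * dx + dy * dy) in
  (cos al * (dx / L), cos al * (dy / L), sin al).

Definition arc_angle (T : Type) (pos : T -> R * R) (alpha : T -> T -> R)
  (v u w : T) : R :=
  vangle (arc_tangent pos v u (alpha v u)) (arc_tangent pos v w (alpha v w)).

Definition ang_res_at_least (T : finType) (e : rel T) (pos : T -> R * R)
  (alpha : T -> T -> R) (r : R) : Prop :=
  forall v u w : T, e v u -> e v w -> u <> w -> r <= arc_angle pos alpha v u w.

From mathcomp Require Import all_boot zify.
From Stdlib Require Import Reals Lra Psatz.

Set Implicit Arguments.
Unset Strict Implicit.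
Unset Printing Implicit Defensive.

(* Give every edge one of the 2d "heights" k * pi/(4d), k < 2d,
   as its elevation angle alpha_e, in such a way that edges sharing a vertex
   get different heights; then their tangent rays make an angle of at least
   pi/(4d), whatever the positions of the vertices in the base plane.
   Indeed, the tangent at v of an arc of elevation a is the unit vector
   (cos a * w, sin a) for a horizontal unit vector w, and the angle between
   two such vectors is at least the difference of their elevations.  The
   required assignment of heights is a proper edge colouring with 2d
   colours, which exists by the greedy argument. *)

Lemma fresh_below (l : seq nat) (n : nat) :
  size l < n -> exists2 k, k < n & k \notin l.
Proof.
move=> Hsize; case: (boolP (all (mem l) (iota 0 n))).
  move/allP=> Hsub; have := uniq_leq_size (iota_uniq 0 n) Hsub.
  by rewrite size_iota leqNgt Hsize.
by case/allPn=> k; rewrite mem_iota add0n => /andP[_ Hk] Hkl; exists k.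
Qed.

Section EdgeColouring.
Variable T : finType.

Definition edge_colouring (f : rel T) (k : nat) (c : T -> T -> nat) : Prop :=
  (forall a b, f a b -> c a b = c b a /\ c a b < k) /\
  (forall v u w, f v u -> f v w -> u <> w -> c v u <> c v w).

Definition edges (f : rel T) : {set T * T} := [set p | f p.1 p.2].

Lemma degree_sub (f g : rel T) x :
  (forall y, g x y -> f x y) -> degree g x <= degree f x.
Proof.
by move=> Hgf; apply/subset_leq_card/subsetP=> y; rewrite !inE; apply: Hgf.
Qed.

Lemma degree_sub_lt (f g : rel T) x y :
  (forall z, g x z -> f x z) -> f x y -> ~~ g x y -> degree g x < degree f x.
Proof.
move=> Hgf fxy ngxy; apply/proper_card/properP; split.
  by apply/subsetP=> z; rewrite !inE; apply: Hgf.
by exists y; rewrite !inE.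
Qed.

Definition is_pair (a b x y : T) : bool :=
  ((x == a) && (y == b)) || ((x == b) && (y == a)).

Lemma is_pairC a b x y : is_pair a b x y = is_pair a b y x.
Proof. by rewrite /is_pair orbC andbC [(y == b) && _]andbC. Qed.

Lemma is_pair_other a b v u w : is_pair a b v u -> is_pair a b v w -> u = w.
Proof.
by rewrite /is_pair => /orP[]/andP[/eqP-> /eqP->] /orP[]/andP[/eqP Eab /eqP->].
Qed.

Definition remove_edge (f : rel T) (a b : T) : rel T :=
  fun x y => f x y && ~~ is_pair a b x y.

Lemma remove_edge_sym (f : rel T) a b : symmetric f -> symmetric (remove_edge f a b).
Proof. by move=> fsym x y; rewrite /remove_edge fsym is_pairC. Qed.

Lemma remove_edge_sub (f : rel T) a b x y : remove_edge f a b x y -> f x y.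
Proof. by case/andP. Qed.

Lemma remove_edge_fewer (f : rel T) a b :
  f a b -> #|edges (remove_edge f a b)| < #|edges f|.
Proof.
move=> fab; apply/proper_card/properP; split.
  by apply/subsetP=> -[x y]; rewrite !inE => /andP[].
by exists (a, b); rewrite !inE /= ?fab // /remove_edge /is_pair !eqxx andbF.
Qed.

Lemma recolour_edge (f : rel T) a b k n c :
  f a b -> k < n -> edge_colouring (remove_edge f a b) n c ->
  (forall x, remove_edge f a b a x -> c a x != k) ->
  (forall x, remove_edge f a b b x -> c b x != k) ->
  edge_colouring f n (fun x y => if is_pair a b x y then k else c x y).
Proof.
move=> fab Hk [Hc1 Hc2] Hfa Hfb.
have split_edge x y : f x y -> is_pair a b x y \/ remove_edge f a b x y.
  by rewrite /remove_edge; case: (is_pair a b x y) => ->; [left|right].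
have not_pair x y : remove_edge f a b x y -> is_pair a b x y = false.
  by case/andP=> _ /negbTE.
have away v u : is_pair a b v u -> forall x, remove_edge f a b v x -> c v x != k.
  by case/orP=> /andP[/eqP-> _]; [apply: Hfa|apply: Hfb].
split=> [x y fxy|v u w fvu fvw uw].
  rewrite -(is_pairC a b x y); case: ifP=> // Hp.
  by case: (split_edge x y fxy); rewrite ?Hp //; apply: Hc1.
case: (split_edge v u fvu) (split_edge v w fvw) => [Pu|Ru] [Pw|Rw].
- by case: uw; apply: is_pair_other Pu Pw.
- by rewrite Pu (not_pair _ _ Rw); apply/eqP; rewrite eq_sym; apply: away Pu _ Rw.
- by rewrite Pw (not_pair _ _ Ru); apply/eqP; apply: away Pw _ Ru.
- by rewrite (not_pair _ _ Ru) (not_pair _ _ Rw); apply: Hc2.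
Qed.

(* Remove an edge {a, b},
   colour the rest, and give {a, b} a colour avoiding the fewer than 2d
   colours already used at a and at b. *)
Lemma greedy_edge_colouring (d : nat) (f : rel T) :
  symmetric f -> (forall v, degree f v <= d) ->
  exists c, edge_colouring f (2 * d) c.
Proof.
have [m Hm] : exists m, #|edges f| < m by exists #|edges f|.+1.
elim: m f Hm => // m IH f Hm fsym fdeg.
case: (pickP [pred p : T * T | f p.1 p.2]) => [[a b] /= fab|nof]; last first.
  have nof' x y : f x y = false := nof (x, y).
  by exists (fun _ _ => 0); split=> [x y|v u w]; rewrite nof'.
pose g := remove_edge f a b.
have gf x y : g x y -> f x y := @remove_edge_sub f a b x y.
have [c Hc] : exists c, edge_colouring g (2 * d) c.
  apply: IH; first exact: leq_trans (remove_edge_fewer fab) Hm.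
    exact: remove_edge_sym.
  by move=> v; apply: leq_trans (fdeg v); apply: degree_sub => y; apply: gf.
pose used := map (c a) (enum [pred x | g a x]) ++ map (c b) (enum [pred x | g b x]).
have Hused : size used < 2 * d.
  have ga : degree g a < degree f a.
    apply: (degree_sub_lt (y := b)) => // [z|]; first exact: gf.
    by rewrite /g /remove_edge /is_pair !eqxx andbF.
  have gb : degree g b < degree f b.
    apply: (degree_sub_lt (y := a)) => [z||]; first exact: gf.
      by rewrite fsym.
    by rewrite /g /remove_edge /is_pair !eqxx orbT andbF.
  have -> : size used = degree g a + degree g b.
    by rewrite size_cat !size_map -!cardE.
  by move: ga gb (fdeg a) (fdeg b); lia.
have [k Hk Hkused] := fresh_below Hused.
exists (fun x y => if is_pair a b x y then k else c x y).
apply: recolour_edge => // x gx; apply: contraNneq Hkused => <-.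
  by rewrite mem_cat map_f ?mem_enum.
by rewrite mem_cat orbC map_f ?mem_enum.
Qed.

End EdgeColouring.

Open Scope R_scope.

Definition elevated (a x y : R) : R3 := (cos a * x, cos a * y, sin a).

Lemma unit_direction (x y : R) : 0 < x * x + y * y ->
  (x / sqrt (x * x + y * y)) * (x / sqrt (x * x + y * y)) +
  (y / sqrt (x * x + y * y)) * (y / sqrt (x * x + y * y)) = 1.
Proof.
move=> Hpos; set L := sqrt _.
have HL : L * L = x * x + y * y by apply: sqrt_sqrt; lra.
have L0 : L <> 0 by move=> E; rewrite E in HL; lra.
have -> : (x / L) * (x / L) + (y / L) * (y / L) = (x * x + y * y) / (L * L) by field.
by rewrite HL; field; lra.
Qed.

Lemma norm_elevated a x y : x * x + y * y = 1 -> norm3 (elevated a x y) = 1.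
Proof.
move=> Hxy; rewrite /norm3 /dot3 /elevated -sqrt_1; congr sqrt.
have := sin2_cos2 a; rewrite /Rsqr; nra.
Qed.

Lemma dot_elevated a1 x1 y1 a2 x2 y2 :
  dot3 (elevated a1 x1 y1) (elevated a2 x2 y2) =
  cos a1 * cos a2 * (x1 * x2 + y1 * y2) + sin a1 * sin a2.
Proof. by rewrite /dot3 /elevated; ring. Qed.

Lemma acos_ge t x : -1 <= x <= 1 -> 0 <= t <= PI -> x <= cos t -> t <= acos x.
Proof.
move=> Hx Ht Hxt; apply: Rnot_lt_le => Hlt.
have [A0 APi] := acos_bound x.
have := cos_decreasing_1 _ _ A0 APi (proj1 Ht) (proj2 Ht) Hlt.
by rewrite cos_acos //; lra.
Qed.

(* Two unit vectors with elevations in [0, pi/2] make an angle at least the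
   difference of the elevations, whatever their horizontal directions: their
   dot product is at most cos a1 cos a2 + sin a1 sin a2 = cos (a1 - a2). *)
Lemma vangle_elevated a1 x1 y1 a2 x2 y2 :
  x1 * x1 + y1 * y1 = 1 -> x2 * x2 + y2 * y2 = 1 ->
  0 <= a1 <= PI / 2 -> 0 <= a2 <= PI / 2 ->
  Rabs (a1 - a2) <= vangle (elevated a1 x1 y1) (elevated a2 x2 y2).
Proof.
move=> U1 U2 Ha1 Ha2.
rewrite /vangle (norm_elevated a1 U1) (norm_elevated a2 U2) Rmult_1_r Rdiv_1_r.
rewrite dot_elevated.
have Hp : -1 <= x1 * x2 + y1 * y2 <= 1.
  have := Rle_0_sqr (x1 - x2); have := Rle_0_sqr (y1 - y2).
  have := Rle_0_sqr (x1 + x2); have := Rle_0_sqr (y1 + y2).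
  by rewrite /Rsqr; split; nra.
have Hcc : 0 <= cos a1 * cos a2 by apply: Rmult_le_pos; apply: cos_ge_0; lra.
have Hup : cos a1 * cos a2 * (x1 * x2 + y1 * y2) + sin a1 * sin a2 <= cos (a1 - a2).
  by rewrite cos_minus; nra.
have Hlo : - cos (a1 + a2) <= cos a1 * cos a2 * (x1 * x2 + y1 * y2) + sin a1 * sin a2.
  by rewrite cos_plus; nra.
have := COS_bound (a1 - a2); have := COS_bound (a1 + a2); have := PI_RGT_0.
move=> HPI Hb1 Hb2; apply: acos_ge; first lra.
- by case: (Rle_dec a2 a1) => H; [rewrite Rabs_right | rewrite Rabs_left1]; lra.
- by case: (Rle_dec a2 a1) => H; [rewrite Rabs_right | rewrite Rabs_left1 ?cos_neg]; lra.
Qed.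

Lemma sqdist_pos (p q : R * R) : p <> q ->
  0 < (fst q - fst p) * (fst q - fst p) + (snd q - snd p) * (snd q - snd p).
Proof.
case: p q => [px py] [qx qy] /= pq; apply: Rnot_le_lt => Hle; apply: pq.
have := Rle_0_sqr (qx - px); have := Rle_0_sqr (qy - py); rewrite /Rsqr => H1 H2.
have [Ex Ey] : qx - px = 0 /\ qy - py = 0 by apply: Rplus_sqr_eq_0; rewrite /Rsqr; lra.
by congr pair; lra.
Qed.

Lemma arc_angle_ge (T : Type) (pos : T -> R * R) (alpha : T -> T -> R) v u w :
  pos u <> pos v -> pos w <> pos v ->
  0 <= alpha v u <= PI / 2 -> 0 <= alpha v w <= PI / 2 ->
  Rabs (alpha v u - alpha v w) <= arc_angle pos alpha v u w.
Proof.
move=> Hu Hw Hau Haw; apply: vangle_elevated => //.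
  by apply: unit_direction; apply: sqdist_pos => E; apply: Hu.
by apply: unit_direction; apply: sqdist_pos => E; apply: Hw.
Qed.

Lemma height_range (d k : nat) : (0 < d)%nat -> (k < 2 * d)%nat ->
  0 <= INR k * (PI / (4 * INR d)) <= PI / 2.
Proof.
move=> d0 kd; have Hd : 0 < INR d by apply: lt_0_INR; apply/ltP.
have Hk : INR k <= INR (2 * d) by apply: le_INR; apply/leP/ltnW.
rewrite mult_INR /= in Hk.
have Hq : 0 < PI / (4 * INR d) by apply: Rdiv_lt_0_compat; [apply: PI_RGT_0|lra].
split; first by apply: Rmult_le_pos; [apply: pos_INR|lra].
have -> : PI / 2 = (2 * INR d) * (PI / (4 * INR d)) by field; lra.
by apply: Rmult_le_compat_r; lra.
Qed.

Lemma heights_spaced (m n : nat) (q : R) : m <> n -> 0 <= q ->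
  q <= Rabs (INR m * q - INR n * q).
Proof.
move=> mn q0; rewrite -Rmult_minus_distr_r Rabs_mult (Rabs_right q); last lra.
rewrite -[X in X <= _]Rmult_1_l; apply: Rmult_le_compat_r => //.
case: (ltngtP m n) => [mn'|nm'|E]; last by case: mn.
- have : INR m.+1 <= INR n by apply: le_INR; apply/leP.
  by rewrite S_INR => H; rewrite Rabs_left1; lra.
- have : INR n.+1 <= INR m by apply: le_INR; apply/leP.
  by rewrite S_INR => H; rewrite Rabs_right; lra.
Qed.

Close Scope R_scope.

Theorem theorem2 :
  exists c : R, (0 < c)%R /\
  forall (T : finType) (e : rel T), simple_graph e ->
  forall d : nat, max_degree e = d -> (1 <= d)%N ->
  forall pos : T -> R * R, injective pos ->
  exists alpha : T -> T -> R,
    arc_diagram e alpha /\ ang_res_at_least e pos alpha (c / INR d)%R.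
Proof.
exists (PI / 4)%R; split; first by have := PI_RGT_0; lra.
move=> T e [esym eirr] d Hd d1 pos pinj.
have edeg v : degree e v <= d by rewrite -Hd; apply: leq_bigmax.
have [col [Hcol Hproper]] := greedy_edge_colouring esym edeg.
pose q := (PI / (4 * INR d))%R.
pose alpha a b := (INR (col a b) * q)%R.
have Harc : arc_diagram e alpha.
  move=> a b eab; have [Esym Hlt] := Hcol a b eab.
  by split; [rewrite /alpha Esym | apply: height_range].
have pos_neq v u : e v u -> pos u <> pos v.
  by move=> evu /pinj Euv; move: evu; rewrite Euv eirr.
exists alpha; split=> // v u w evu evw uw.
have [_ Hu] := Harc v u evu; have [_ Hw] := Harc v w evw.
apply: Rle_trans (arc_angle_ge (pos_neq _ _ evu) (pos_neq _ _ evw) Hu Hw).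
have d_pos : (0 < INR d)%R by apply: lt_0_INR; apply/ltP.
have -> : (PI / 4 / INR d = q)%R by rewrite /q; field; lra.
apply: heights_spaced; first exact: Hproper.
by apply: Rlt_le; apply: Rdiv_lt_0_compat; [apply: PI_RGT_0|lra].
Qed.
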